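(* For all nonnegative integers $a,b,c$ (with $E$ taken to be $0$ whenever an argument is negative): $$2(a-b)E(a,b,c)+(a-b+c+1)E(a+1,b,c)+(a-b-c-1)E(a,b+1,c)=0,$$ $$2a\,E(a-1,b,c)+(a-b+c)E(a,b,c)+(c-a-b-1)E(a,b+1,c)=0,$$ $$(a-b)(a+b-c)E(a,b,c)+a(a-b-c-1)E(a-1,b,c)+b(a-b+c+1)E(a,b-1,c)=0,$$ $$(a-b+c+1)(a+b-c+1)E(a+1,b,c)+\big(3a^2+a-(2a+1)(b+c)-(b-c)^2\big)E(a,b,c)+2a(a-b-c-1)E(a-1,b,c)=0.$$
   Context: For nonnegative integers $n_1,\dots,n_S$, $E(n_1,\dots,n_S)$ denotes the number of block derangements: $S$ players hold $n_1,\dots,n_S$ distinct cards respectively; all $N=n_1+\dots+n_S$ cards are redealt so that player $j$ again receives exactly $n_j$ cards (only which cards each player gets matters); $E$ counts the deals in which no player receives any card he originally held. Equivalently, $E(n_1,\dots,n_S)$ is the coefficient of $x_1^{n_1}\cdots x_S^{n_S}$ in $\prod_{j=1}^S(x_1+\dots+x_S-x_j)^{n_j}$. By convention $E(0,\dots,0)=1$. *)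

From HB Require Import structures.
From mathcomp Require Import all_boot all_order all_algebra.
Set Implicit Arguments. Unset Strict Implicit. Unset Printing Implicit Defensive.
Import Order.TTheory GRing.Theory Num.Theory.

(* Players are 0..S-1 with S = size n; player j holds
   nth 0 n j cards.  The N = sumn n cards are numbered 0..N-1, the first
   n_0 held by player 0, the next n_1 by player 1, etc. *)
Definition owner (n : seq nat) (k : nat) : nat :=
  nth 0 (flatten [seq nseq (nth 0 n j) j | j <- iota 0 (size n)]) k.

Definition block_derangement (n : seq nat)
    (f : {ffun 'I_(sumn n) -> 'I_(size n)}) : bool :=
  [forall j : 'I_(size n), #|[set k | f k == j]| == nth 0 n j] &&
  [forall k : 'I_(sumn n), (val (f k) != owner n k)].

Definition E (n : seq nat) : nat := #|[set f : {ffun 'I_(sumn n) -> 'I_(size n)} | block_derangement f]|.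

Definition Ez (a b c : int) : int :=
  match a, b, c with
  | Posz a', Posz b', Posz c' => (E [:: a'; b'; c'])%:Z
  | _, _, _ => 0
  end.

(* Give each card k of player o and each player j <> o the
      weight X (j = 0), Y (j = 1) or 1 (j = 2).  Expanding the product over
      all cards of the sum of these weights enumerates all deals, and the
      coefficient of X^a Y^b picks exactly the block derangements; the
      product itself is (1 + Y)^a (1 + X)^b (X + Y)^c.  Reading off the
      coefficient gives the binomial sum
        E(a,b,c) = \sum_i C(c,i) C(b,a-i) C(a,b-c+i)                (Esum).
   2. WZ certificates.  Over a field of characteristic 0 each summand is a
      product of reciprocal factorials 1/m! (taken to be 0 for m < 0).
      Recurrences (1) and (2) (shifted in a) hold termwise up to an explicit
      telescoping difference G(i+1) - G(i) vanishing at both ends of the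
      summation range, hence hold for Esum.
   3. Algebra.  Recurrence (2) at a = 0 and (3) at a = 0 or b = 0 follow
      from the closed forms E(0,b,c) = [b = c] and E(a,0,c) = [a = c];
      otherwise (3) and (4) are linear combinations of (1) and (2). *)

From HB Require Import structures.
From mathcomp Require Import all_boot all_order all_algebra.
From mathcomp Require Import ring zify.
Import Order.TTheory GRing.Theory Num.Theory.
Local Open Scope ring_scope.

Definition binz (n : nat) (m : int) : nat := if m is Posz k then 'C(n, k) else 0.

Definition Esum (a b c : nat) : nat :=
  \sum_(i < c.+1) 'C(c, i) * binz b (a%:Z - i%:Z) * binz a (b%:Z - c%:Z + i%:Z).

Lemma binz_neg (n : nat) (m : int) : m < 0 -> binz n m = 0%N.
Proof. by case: m. Qed.

Lemma binz0n (m : int) : binz 0 m = (m == 0).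
Proof. by case: m => [[|m]|m]. Qed.

(* binz evaluated at a difference of naturals, as the truncated-subtraction
   expression produced by coefficient extraction. *)
Lemma binz_subn (n m k : nat) :
  binz n (m%:Z - k%:Z) = if (m < k)%N then 0%N else 'C(n, m - k).
Proof.
case: ltnP => [mk|km]; first by rewrite binz_neg //; lia.
by rewrite subzn.
Qed.

Lemma binz_subn_add (n m k l : nat) : (l <= k)%N ->
  binz n (m%:Z - k%:Z + l%:Z) = if (m < k - l)%N then 0%N else 'C(n, m - (k - l)).
Proof. by move=> lk; rewrite -binz_subn; congr binz; lia. Qed.

(* Boundary values: with no cards for player 0 (resp. 1) the deal is forced. *)
Lemma Esum0l (b c : nat) : Esum 0 b c = (b == c).
Proof.
rewrite /Esum big_ord_recl big1 => [|i _]; last by rewrite binz_neg ?muln0 ?mul0n //=; lia.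
by rewrite addn0 /= bin0 mul1n addn0 bin0 mul1n addr0 binz0n subr_eq0.
Qed.

Lemma Esum0r (a c : nat) : Esum a 0 c = (a == c).
Proof.
rewrite /Esum big_ord_recr big1 => [|i _] /=; last first.
  by rewrite (@binz_neg a) ?muln0 //; have := ltn_ord i; lia.
rewrite binn (_ : 0%:Z - c%:Z + c%:Z = 0) ?subr_eq0 ?binz0n; last by lia.
by rewrite add0n mul1n /= bin0 muln1 subr_eq0.
Qed.

Lemma owner3 (a b c k : nat) : owner [:: a; b; c] k =
  if (k < a)%N then 0%N else if (k < a + b)%N then 1%N
  else if (k < a + b + c)%N then 2%N else 0%N.
Proof.
rewrite /owner /= cats0 !nth_cat !size_nseq.
case: (ltnP k a) => ka; first by rewrite nth_nseq ka.
case: (ltnP (k - a) b) => kab.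
  by rewrite nth_nseq kab (_ : (k < a + b)%N = true) //; lia.
rewrite (_ : (k < a + b)%N = false) ?nth_nseq; last by lia.
case: (ltnP (k - a - b) c) => kabc.
  by rewrite (_ : (k < a + b + c)%N = true) //; lia.
by rewrite (_ : (k < a + b + c)%N = false) //; lia.
Qed.

Lemma coef_binomial_power (R : comNzRingType) (n k : nat) :
  ((1 + 'X : {poly R}) ^+ n)`_k = 'C(n, k)%:R.
Proof.
rewrite exprDn coef_sum.
under eq_bigr do rewrite expr1n mul1r coefMn coefXn.
case: (leqP k n) => kn.
  rewrite (bigD1 (Ordinal (kn : (k < n.+1)%N))) //= eqxx big1 ?addr0 // => i ik.
  rewrite (_ : (k == i) = false) ?mul0rn //.
  by apply: contraNF ik => /eqP ki; apply/eqP/val_inj.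
rewrite bin_small // big1 // => i _.
rewrite (_ : (k == i) = false) ?mul0rn //.
by apply/negbTE; rewrite neq_ltn (leq_trans (ltn_ord i)) ?orbT.
Qed.

(* Bivariate polynomials over R are {poly {poly R}}: the outer variable 'X
   counts cards received by player 0, the inner one 'X%:P (written Y) those
   received by player 1. *)
Section GeneratingPolynomial.
Variable R : comNzRingType.
Implicit Types a b c : nat.

Definition player_mono (j : nat) : {poly {poly R}} :=
  'X ^+ (j == 0)%N * ('X%:P) ^+ (j == 1)%N.

Definition card_weight a b c (k j : nat) : {poly {poly R}} :=
  if j == owner [:: a; b; c] k then 0 else player_mono j.

Lemma coef_monoXY (p q a b : nat) :
  ((('X ^+ p : {poly {poly R}}) * ('X%:P) ^+ q)`_a)`_b = ((p == a) && (q == b))%:R.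
Proof.
rewrite -rmorphXn mulrC coefCM coefXn eq_sym.
case: (p =P a) => [_|_] /=; last by rewrite mulr0 coef0.
by rewrite mulr1 coefXn eq_sym.
Qed.

(* The weight of a deal f has coefficient 1 at X^a Y^b exactly when f is a
   block derangement: it vanishes if a card returns to its owner, and
   otherwise is X^(#cards to 0) Y^(#cards to 1); the quota of player 2 is
   then forced by the total number of cards. *)
Lemma coef_deal_weight a b c
    (f : {ffun 'I_(sumn [:: a; b; c]) -> 'I_(size [:: a; b; c])}) :
  ((\prod_(k : 'I_(sumn [:: a; b; c])) card_weight a b c k (f k))`_a)`_b
  = (block_derangement f : nat)%:R.
Proof.
pose received j := (\sum_k (val (f k) == j : nat))%N.
have card_received j : #|[set k | f k == j]| = received (val j).
  rewrite -sum1dep_card big_mkcond /=; apply: eq_bigr => k _.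
  by rewrite val_eqE; case: (f k == j).
have received_total : (received 0 + received 1 + received 2 = a + (b + (c + 0)))%N.
  rewrite /received -!big_split /= (eq_bigr (fun _ => 1%N)) => [|k _].
    by rewrite sum_nat_const card_ord muln1.
  by case: (f k) => [[|[|[|j]]] hj].
have quotas : [forall j, #|[set k | f k == j]| == nth 0%N [:: a; b; c] j]
    = (received 0 == a) && (received 1 == b).
  apply/forallP/andP => [H | [/eqP r0 /eqP r1] j].
    by split; [have := H ord0 | have := H (Ordinal (isT : (1 < 3)%N))]; rewrite card_received.
  rewrite card_received; case: j => [[|[|[|j]]] hj] //=; try by apply/eqP.
  by apply/eqP; move: received_total; rewrite r0 r1; lia.
rewrite /block_derangement quotas.
case: (boolP [forall k, val (f k) != owner [:: a; b; c] k]) => [deranged|].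
  rewrite andbT (eq_bigr (fun k => player_mono (f k))) => [|k _]; last first.
    by rewrite /card_weight (negbTE (forallP deranged k)).
  by rewrite big_split /= !prodrXr coef_monoXY.
move/forallPn => [k /negPn fixed].
by rewrite andbF (bigD1 k) //= /card_weight fixed mul0r !coef0.
Qed.

Definition deal_polynomial a b c : {poly {poly R}} :=
  ((1 + 'X) ^+ a)%:P * ((1 + 'X) ^+ b * ('X%:P + 'X) ^+ c).

(* Each card of player 0 contributes Y + 1, of player 1 X + 1, of player 2
   X + Y. *)
Lemma prod_card_weights a b c :
  \prod_(k : 'I_(sumn [:: a; b; c])) \sum_(j : 'I_(size [:: a; b; c])) card_weight a b c k j
  = deal_polynomial a b c.
Proof.
pose w k := card_weight a b c k 0 + card_weight a b c k 1 + card_weight a b c k 2.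
rewrite (eq_bigr (fun k : 'I_(sumn [:: a; b; c]) => w k)) => [|k _]; last first.
  by rewrite !big_ord_recr big_ord0 /= add0r.
have w_player0 k : (0 <= k < a)%N -> w k = 1 + 'X%:P.
  by case/andP=> _ ka; rewrite /w /card_weight !owner3 ka /player_mono /=; ring.
have w_player1 k : (a <= k < a + b)%N -> w k = 1 + 'X.
  case/andP=> ak kab; rewrite /w /card_weight !owner3 kab (_ : (k < a)%N = false); last by lia.
  by rewrite /player_mono /=; ring.
have w_player2 k : (a + b <= k < a + (b + (c + 0)))%N -> w k = 'X%:P + 'X.
  case/andP=> abk kabc; rewrite /w /card_weight !owner3 (_ : (k < a)%N = false); last by lia.
  rewrite (_ : (k < a + b)%N = false); last by lia.
  rewrite (_ : (k < a + b + c)%N = true); last by lia.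
  by rewrite /player_mono /=; ring.
rewrite -(big_mkord xpredT w) (@big_cat_nat _ _ _ a) //=; last by lia.
rewrite (@big_cat_nat _ _ _ (a + b) a) //=; [|lia|lia].
rewrite (eq_big_nat _ _ w_player0) (eq_big_nat _ _ w_player1) (eq_big_nat _ _ w_player2).
rewrite !prodr_const_nat subn0 (_ : (a + b - a = b)%N); last by lia.
rewrite (_ : (a + (b + (c + 0)) - (a + b) = c)%N); last by lia.
by rewrite /deal_polynomial rmorphXn rmorphD /= polyC1.
Qed.

Lemma deal_count_coef a b c : ((deal_polynomial a b c)`_a)`_b = (E [:: a; b; c])%:R.
Proof.
rewrite -prod_card_weights bigA_distr_bigA !coef_sum.
rewrite /E -sum1dep_card natr_sum [RHS]big_mkcond /=.
by apply: eq_bigr => f _; rewrite coef_deal_weight; case: block_derangement.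
Qed.

(* Expanding (X + Y)^c by the binomial theorem, the summand with X^i Y^(c-i)
   contributes C(c,i) C(b,a-i) C(a,b-c+i) to the coefficient of X^a Y^b. *)
Lemma coef_deal_polynomial a b c : ((deal_polynomial a b c)`_a)`_b = (Esum a b c)%:R.
Proof.
rewrite /deal_polynomial coefCM (exprDn 'X%:P 'X c) mulr_sumr coef_sum.
under eq_bigr do rewrite mulrnAr coefMn -rmorphXn mulrCA coefCM coefMXn coef_binomial_power.
rewrite mulr_sumr coef_sum /Esum natr_sum; apply: eq_bigr => i _.
have ic : (i <= c)%N by rewrite -ltnS.
rewrite binz_subn binz_subn_add // (_ : (if _ then _ else _)
  = (if (a < i)%N then 0%N else 'C(b, a - i))%:R); last by case: ifP.
rewrite mulr_natr !mulrnAr !coefMn coefMXn coef_binomial_power.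
by case: ifP => _; rewrite -!mulrnA ?mul0rn ?muln0 //; congr (_ *+ _); ring.
Qed.

End GeneratingPolynomial.

Lemma E3_Esum (a b c : nat) : E [:: a; b; c] = Esum a b c.
Proof.
have := coef_deal_polynomial int a b c.
by rewrite deal_count_coef !natz => -[].
Qed.

Section HypergeometricTerms.
Variable R : numFieldType.
Implicit Types a b c : nat.

(* 1/m!, extended by 0 to negative m, so that 1/m! = (m+1) * 1/(m+1)! for
   every integer m. *)
Definition invfact (m : int) : R := if m is Posz n then (n`!%:R)^-1 else 0.

(* A copy of invfact marking the factors already rewritten in terms of a
   chosen base point; it makes the normalization below terminate. *)
Definition invfact_base : int -> R := invfact.

Fixpoint ffactz (u : int) (k : nat) : R :=
  if k is k'.+1 then (u - k'%:Z)%:~R * ffactz u k' else 1.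

Lemma invfact_neg (m : int) : m < 0 -> invfact m = 0.
Proof. by case: m. Qed.

Lemma invfactS (m : int) : invfact m = (m + 1)%:~R * invfact (m + 1).
Proof.
case: m => [n|[|n]]; last 2 first.
- by rewrite mul0r.
- by rewrite (_ : Negz n.+1 + 1 = Negz n) ?mulr0 //; lia.
rewrite -[Posz n + 1]PoszD /= addn1 factS natrM invfM mulrA.
by rewrite [n.+1%:~R]/(n.+1%:R) divff ?mul1r // pnatr_eq0.
Qed.

Lemma invfact_shift (m u : int) (k : nat) :
  u = m + k%:Z -> invfact m = ffactz u k * invfact_base u.
Proof.
elim: k m => [|k IH] m /=; first by rewrite addr0 => ->; rewrite mul1r.
move=> um; rewrite invfactS (IH (m + 1)); last by rewrite um; lia.
by rewrite mulrA; congr (_ * _ * _); congr intr; rewrite um; lia.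
Qed.

Definition binq (n : nat) (m : int) : R := n`!%:R * invfact m * invfact (n%:Z - m).

Lemma binqE (n : nat) (m : int) : binq n m = (binz n m)%:R.
Proof.
case: m => [m|m]; last by rewrite /binq mulr0 mul0r.
rewrite /binq /=; case: (leqP m n) => [mn|nm]; last first.
  by rewrite bin_small // invfact_neg ?mulr0 //; lia.
rewrite subzn // /= -(bin_fact mn) !natrM.
have m_fact : (m`!%:R : R) != 0 by rewrite pnatr_eq0 -lt0n fact_gt0.
have nm_fact : ((n - m)`!%:R : R) != 0 by rewrite pnatr_eq0 -lt0n fact_gt0.
by rewrite mulrA mulrAC mulfK // mulfK.
Qed.

Definition wz_term a b c (i : int) : R :=
  binq c i * binq b (a%:Z - i) * binq a (b%:Z - c%:Z + i).

Lemma Esum_wz a b c : (Esum a b c)%:R = \sum_(i < c.+1) wz_term a b c i.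
Proof. by rewrite natr_sum; apply: eq_bigr => i _; rewrite /wz_term !binqE !natrM. Qed.

(* Rewrite every reciprocal factorial 1/m! as (a falling factorial) times
   1/u!, for u the first of the given base points with u - m in {0, 1, 2};
   the resulting identity is then a polynomial identity for ring. *)
Local Ltac shift_invfact m u :=
  first [ rewrite (@invfact_shift m u 0); [|lia]
        | rewrite (@invfact_shift m u 1); [|lia]
        | rewrite (@invfact_shift m u 2); [|lia] ].

Local Ltac normalize_invfact u1 u2 u3 u4 u5 u6 :=
  repeat match goal with |- context [invfact ?m] =>
    first [ shift_invfact m u1 | shift_invfact m u2 | shift_invfact m u3
          | shift_invfact m u4 | shift_invfact m u5 | shift_invfact m u6 ] end;
  rewrite /ffactz.

Definition wz_cert1 a b c (j : int) : R :=
  let d : R := a%:R - b%:R in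
  (- d * j%:~R ^+ 2 + (d * (c%:R + 1 + d) - (a%:R + 1) * (c%:R + 1)) * j%:~R) *
  (a`!%:R * b`!%:R * c`!%:R * invfact j * invfact (c%:Z - j) * invfact (a%:Z + 1 - j)
   * invfact (b%:Z - a%:Z + j) * invfact (b%:Z - c%:Z + j)
   * invfact (a%:Z - b%:Z + c%:Z + 1 - j)).

Lemma wz_pair1 a b c (j : int) :
  2 * (a%:R - b%:R) * wz_term a b c j + (a%:R - b%:R + c%:R + 1) * wz_term a.+1 b c j
  + (a%:R - b%:R - c%:R - 1) * wz_term a b.+1 c j
  = wz_cert1 a b c (j + 1) - wz_cert1 a b c j.
Proof.
rewrite /wz_term /binq /wz_cert1 !factS !natrM.
normalize_invfact (j + 1) (c%:Z - j) (a%:Z + 1 - j) (b%:Z - a%:Z + j + 1)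
  (b%:Z - c%:Z + j + 1) (a%:Z - b%:Z + c%:Z + 1 - j).
ring.
Qed.

Definition wz_cert2 a b c (j : int) : R := - j%:~R * wz_term a.+1 b c j.

Lemma wz_pair2 a b c (j : int) :
  2 * a.+1%:R * wz_term a b c j + (a.+1%:R - b%:R + c%:R) * wz_term a.+1 b c j
  + (c%:R - a.+1%:R - b%:R - 1) * wz_term a.+1 b.+1 c j
  = wz_cert2 a b c (j + 1) - wz_cert2 a b c j.
Proof.
rewrite /wz_cert2 /wz_term /binq !factS !natrM.
normalize_invfact (j + 1) (c%:Z - j) (a%:Z + 1 - j) (b%:Z - a%:Z + j)
  (b%:Z - c%:Z + j + 1) (a%:Z - b%:Z + c%:Z + 1 - j).
ring.
Qed.

Lemma telescope_vanish (G : int -> R) (n : nat) :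
  G 0 = 0 -> G n%:Z = 0 -> \sum_(i < n) (G (i%:Z + 1) - G i) = 0.
Proof.
move=> G0 Gn; rewrite (eq_bigr (fun i : 'I_n => G i.+1 - G i)) => [|i _]; last first.
  by congr (G _ - _); lia.
by rewrite -(big_mkord xpredT (fun i => G i.+1 - G i)) telescope_sumr // Gn G0 subr0.
Qed.

End HypergeometricTerms.

Section Recurrences.
Variable R : numFieldType.
Implicit Types a b c : nat.
Local Notation S a b c := ((Esum a b c)%:R : R).

Definition rec1 a b c : R :=
  2 * (a%:R - b%:R) * S a b c + (a%:R - b%:R + c%:R + 1) * S a.+1 b c
  + (a%:R - b%:R - c%:R - 1) * S a b.+1 c.

Definition rec2 a b c : R :=
  2 * a%:R * S a.-1 b c + (a%:R - b%:R + c%:R) * S a b c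
  + (c%:R - a%:R - b%:R - 1) * S a b.+1 c.

Definition rec3 a b c : R :=
  (a%:R - b%:R) * (a%:R + b%:R - c%:R) * S a b c
  + a%:R * (a%:R - b%:R - c%:R - 1) * S a.-1 b c
  + b%:R * (a%:R - b%:R + c%:R + 1) * S a b.-1 c.

Definition rec4 a b c : R :=
  (a%:R - b%:R + c%:R + 1) * (a%:R + b%:R - c%:R + 1) * S a.+1 b c
  + (3 * a%:R ^+ 2 + a%:R - (2 * a%:R + 1) * (b%:R + c%:R) - (b%:R - c%:R) ^+ 2) * S a b c
  + 2 * a%:R * (a%:R - b%:R - c%:R - 1) * S a.-1 b c.

Lemma Esum_rec1 a b c : rec1 a b c = 0.
Proof.
rewrite /rec1 !Esum_wz !mulr_sumr -!big_split /=.
under eq_bigr do rewrite wz_pair1.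
apply: telescope_vanish; rewrite /wz_cert1; first by ring.
rewrite (@invfact_neg R (c%:Z - c.+1%:Z)); last by lia.
by rewrite !(mulr0, mul0r).
Qed.

Lemma Esum_rec2_succ a b c : rec2 a.+1 b c = 0.
Proof.
rewrite /rec2 succnK !Esum_wz !mulr_sumr -!big_split /=.
under eq_bigr do rewrite wz_pair2.
apply: telescope_vanish; rewrite /wz_cert2; first by ring.
by rewrite /wz_term (binqE R c c.+1) /= bin_small // !mul0r mulr0.
Qed.

Lemma Esum_rec2 a b c : rec2 a b c = 0.
Proof.
case: a => [|a]; last exact: Esum_rec2_succ.
rewrite /rec2 !Esum0l.
by do 2 case: eqP => [?|?]; subst => /=; first [ring | exfalso; lia].
Qed.

Lemma Esum_rec3 a b c : rec3 a b c = 0.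
Proof.
case: a b => [|a] [|b].
- by rewrite /rec3; ring.
- rewrite /rec3 succnK !Esum0l.
  by do 2 case: eqP => [?|?]; subst => /=; first [ring | exfalso; lia].
- rewrite /rec3 succnK !Esum0r.
  by do 2 case: eqP => [?|?]; subst => /=; first [ring | exfalso; lia].
transitivity ((a%:R + 1) * rec1 a b c - (a%:R - b%:R) * rec2 a.+1 b c).
  by rewrite /rec1 /rec2 /rec3 !succnK; ring.
by rewrite Esum_rec1 Esum_rec2; ring.
Qed.

Lemma Esum_rec4 a b c : rec4 a b c = 0.
Proof.
transitivity ((a%:R - b%:R - c%:R - 1) * rec2 a b c - (c%:R - a%:R - b%:R - 1) * rec1 a b c).
  by rewrite /rec1 /rec2 /rec4; ring.
by rewrite Esum_rec1 Esum_rec2; ring.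
Qed.

End Recurrences.

Lemma Ez_Esum (a b c : nat) : (Ez a b c)%:~R = (Esum a b c)%:R :> rat.
Proof. by rewrite /Ez E3_Esum. Qed.

Lemma int_eq0_rat (x : int) : (x%:~R : rat) = 0 -> x = 0.
Proof. by move/eqP; rewrite intr_eq0 => /eqP. Qed.

Lemma PoszS (n : nat) : n%:Z + 1 = n.+1%:Z.
Proof. by rewrite addrC -intS. Qed.

Lemma PoszSK (n : nat) : n.+1%:Z - 1 = n%:Z.
Proof. by rewrite -PoszS addrK. Qed.

Theorem mainTheorem7 (a b c : nat) :
  let A : int := a%:Z in let B : int := b%:Z in let C : int := c%:Z in
  [/\ 2 * (A - B) * Ez A B C + (A - B + C + 1) * Ez (A + 1) B C
        + (A - B - C - 1) * Ez A (B + 1) C = 0,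
      2 * A * Ez (A - 1) B C + (A - B + C) * Ez A B C
        + (C - A - B - 1) * Ez A (B + 1) C = 0,
      (A - B) * (A + B - C) * Ez A B C + A * (A - B - C - 1) * Ez (A - 1) B C
        + B * (A - B + C + 1) * Ez A (B - 1) C = 0 &
      (A - B + C + 1) * (A + B - C + 1) * Ez (A + 1) B C
        + (3 * A ^+ 2 + A - (2 * A + 1) * (B + C) - (B - C) ^+ 2) * Ez A B C
        + 2 * A * (A - B - C - 1) * Ez (A - 1) B C = 0].
Proof.
move=> A B C; rewrite /A /B /C {A B C} !PoszS.
split; apply: int_eq0_rat.
- by rewrite -[RHS](Esum_rec1 rat a b c) /rec1 -!Ez_Esum; ring.
- rewrite -[RHS](Esum_rec2 rat a b c) /rec2 -!Ez_Esum.
  by case: a => [|a]; rewrite ?PoszSK; ring.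
- rewrite -[RHS](Esum_rec3 rat a b c) /rec3 -!Ez_Esum.
  by case: a => [|a]; case: b => [|b]; rewrite ?PoszSK; ring.
- rewrite -[RHS](Esum_rec4 rat a b c) /rec4 -!Ez_Esum.
  by case: a => [|a]; rewrite ?PoszSK; ring.
Qed.
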